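(* Let $d\ge 1$ and let $R=(r_{i,j})_{1\le i,j\le d}$ be a real $d\times d$ matrix with all entries strictly positive and $r_{i,i}=1$ for all $i$. Define $l:\mathbb{R}^d\to\mathbb{R}$ by $l(\theta)=\sum_{1\le i,j\le d}(\theta_i-r_{i,j}\theta_j)^2$. Then every minimizer $\xi$ of $l$ over the unit sphere $\{\theta\in\mathbb{R}^d:\|\theta\|=1\}$ (Euclidean norm) has all its components nonzero and of the same sign. *)

From mathcomp Require Import all_boot all_order all_algebra.
From mathcomp Require Import reals.
Set Implicit Arguments. Unset Strict Implicit. Unset Printing Implicit Defensive.
Import Order.TTheory GRing.Theory Num.Theory.
Local Open Scope ring_scope.

Definition lossR (R : realType) (d : nat) (Rm : 'M[R]_d) (th : 'rV[R]_d) : R :=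
  \sum_(i < d) \sum_(j < d) (th ord0 i - Rm i j * th ord0 j) ^+ 2.

Definition eucl_norm (R : realType) (d : nat) (th : 'rV[R]_d) : R :=
  Num.sqrt (\sum_(i < d) th ord0 i ^+ 2).

Definition unit_sphere (R : realType) (d : nat) (th : 'rV[R]_d) : Prop :=
  eucl_norm th = 1.

Definition is_sphere_minimizer (R : realType) (d : nat) (Rm : 'M[R]_d)
  (xi : 'rV[R]_d) : Prop :=
  unit_sphere xi /\ forall th, unit_sphere th -> lossR Rm xi <= lossR Rm th.

From mathcomp Require Import all_boot all_order all_algebra.
From mathcomp Require Import reals.
From mathcomp Require Import ring lra.
Import Order.TTheory GRing.Theory Num.Theory.
Set Implicit Arguments. Unset Strict Implicit.
Local Open Scope ring_scope.

(* Since l is a quadratic form, minimality of xi on the sphere means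
   l(xi) |th|^2 <= l(th) for every th.  Replacing th by its componentwise
   absolute value changes each term (th_i - r_ij th_j)^2 by
   -2 r_ij (|th_i th_j| - th_i th_j) <= 0, so for th = xi all these gaps must
   vanish: xi_i xi_j >= 0 for all i, j.  If some xi_k were 0, e_k would be
   tangent to the sphere at xi, and the first-order condition would force the
   polar form B(xi, e_k) = - sum_j (r_kj + r_jk) xi_j to vanish, which is
   impossible as the xi_j share a sign and are not all zero. *)

Lemma sqrB_normB (R : realDomainType) (a b r : R) :
  (a - r * b) ^+ 2 - (`|a| - r * `|b|) ^+ 2 = 2 * r * (`|a| * `|b| - a * b).
Proof. by rewrite !sqrrB !exprMn !real_normK ?num_real //; ring. Qed.

Lemma quadratic_ge0_linear_coef_eq0 (R : realFieldType) (a b : R) :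
  (forall t, 0 <= a * t + b * t ^+ 2) -> a = 0.
Proof.
move=> hq; set s := (`|b| + 1)^-1.
have s_gt0 : 0 < s by rewrite invr_gt0 ltr_wpDl.
have bs_lt1 : b * s < 1.
  by rewrite ltr_pdivrMr ?ltr_wpDl // mul1r; have := ler_norm b; lra.
have : 0 <= a ^+ 2 * (s * (b * s - 1)).
  by have := hq (- a * s); congr (_ <= _); ring.
rewrite nmulr_lge0 ?pmulr_rlt0 ?subr_lt0 // => a2_le0.
by apply/eqP; rewrite -sqrf_eq0 eq_le a2_le0 sqr_ge0.
Qed.

Section SphereMinimizer.
Variables (R : realType) (d : nat) (Rm : 'M[R]_d).
Implicit Types (th v : 'rV[R]_d) (t : R).

Definition sqnorm th := \sum_(i < d) th ord0 i ^+ 2.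

Definition dotr th v := \sum_(i < d) th ord0 i * v ord0 i.

Definition lossR_polar th v := \sum_(i < d) \sum_(j < d)
  (th ord0 i - Rm i j * th ord0 j) * (v ord0 i - Rm i j * v ord0 j).

Lemma sqnorm_ge0 th : 0 <= sqnorm th.
Proof. by apply: sumr_ge0 => i _; apply: sqr_ge0. Qed.

Lemma lossR_ge0 th : 0 <= lossR Rm th.
Proof. by do 2!apply: sumr_ge0 => ? _; apply: sqr_ge0. Qed.

Lemma unit_sphereE th : unit_sphere th <-> sqnorm th = 1.
Proof.
rewrite /unit_sphere /eucl_norm -/(sqnorm th); split=> [h|->]; last exact: sqrtr1.
by rewrite -(sqr_sqrtr (sqnorm_ge0 th)) h expr1n.
Qed.

Lemma sqnormZ t th : sqnorm (t *: th) = t ^+ 2 * sqnorm th.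
Proof. by rewrite /sqnorm mulr_sumr; apply: eq_bigr => i _; rewrite !mxE exprMn. Qed.

Lemma lossRZ t th : lossR Rm (t *: th) = t ^+ 2 * lossR Rm th.
Proof.
rewrite /lossR mulr_sumr; apply: eq_bigr => i _; rewrite mulr_sumr.
by apply: eq_bigr => j _; rewrite !mxE; ring.
Qed.

Lemma sqnormD th v t :
  sqnorm (th + t *: v) = sqnorm th + 2 * t * dotr th v + t ^+ 2 * sqnorm v.
Proof.
rewrite /sqnorm /dotr !mulr_sumr -!big_split.
by apply: eq_bigr => i _ /=; rewrite !mxE; ring.
Qed.

Lemma lossRD th v t : lossR Rm (th + t *: v) =
  lossR Rm th + 2 * t * lossR_polar th v + t ^+ 2 * lossR Rm v.
Proof.
rewrite /lossR /lossR_polar !mulr_sumr -!big_split; apply: eq_bigr => i _ /=.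
by rewrite !mulr_sumr -!big_split; apply: eq_bigr => j _ /=; rewrite !mxE; ring.
Qed.

Lemma sqnorm_norm th : sqnorm (map_mx Num.norm th) = sqnorm th.
Proof. by apply: eq_bigr => i _; rewrite mxE real_normK ?num_real. Qed.

Lemma lossR_sub_norm th : lossR Rm th - lossR Rm (map_mx Num.norm th) =
  \sum_(p : 'I_d * 'I_d) 2 * Rm p.1 p.2 *
    (`|th ord0 p.1 * th ord0 p.2| - th ord0 p.1 * th ord0 p.2).
Proof.
rewrite /lossR !pair_big /= -sumrB.
by apply: eq_bigr => p _; rewrite !mxE sqrB_normB normrM.
Qed.

Lemma sumr_mul_delta (F : 'I_d -> R) k : \sum_(i < d) F i * (i == k)%:R = F k.
Proof.
under eq_bigr do rewrite mulr_natr mulrb.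
by rewrite -big_mkcond big_pred1_eq.
Qed.

Lemma dotr_delta th k : dotr th (delta_mx ord0 k) = th ord0 k.
Proof.
by rewrite /dotr; under eq_bigr do rewrite mxE eqxx /=; rewrite sumr_mul_delta.
Qed.

Lemma lossR_polar_delta th k : th ord0 k = 0 ->
  lossR_polar th (delta_mx ord0 k) = - \sum_(j < d) (Rm k j + Rm j k) * th ord0 j.
Proof.
move=> th_k0; rewrite /lossR_polar.
under eq_bigr do under eq_bigr do rewrite !mxE eqxx /= mulrBr mulrA.
under eq_bigr do rewrite sumrB -mulr_suml sumr_mul_delta.
rewrite sumrB sumr_mul_delta th_k0 -sumrB -sumrN.
by apply: eq_bigr => j _; ring.
Qed.

Variable xi : 'rV[R]_d.
Hypothesis xi_min : is_sphere_minimizer Rm xi.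

Lemma sphere_minimizer_sqnorm : sqnorm xi = 1.
Proof. by apply/unit_sphereE; case: xi_min. Qed.

Lemma sphere_minimizer_le th : lossR Rm xi * sqnorm th <= lossR Rm th.
Proof.
have [S0|S_gt0] := eqVneq (sqnorm th) 0; first by rewrite S0 mulr0 lossR_ge0.
have {}S_gt0 : 0 < sqnorm th by rewrite lt_def S_gt0 sqnorm_ge0.
set c := (Num.sqrt (sqnorm th))^-1.
have c2S : c ^+ 2 * sqnorm th = 1.
  by rewrite exprVn sqr_sqrtr ?mulVf ?gt_eqF // ltW.
have : lossR Rm xi <= lossR Rm (c *: th).
  by case: xi_min => _; apply; rewrite unit_sphereE sqnormZ.
by rewrite lossRZ -(ler_pM2r S_gt0) mulrAC c2S mul1r.
Qed.

Lemma sphere_minimizer_polar_eq0 v : dotr xi v = 0 -> lossR_polar xi v = 0.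
Proof.
move=> xi_v; have /eqP : 2 * lossR_polar xi v = 0.
  apply: (@quadratic_ge0_linear_coef_eq0 _ _ (lossR Rm v - lossR Rm xi * sqnorm v)) => t.
  have := sphere_minimizer_le (xi + t *: v).
  by rewrite sqnormD lossRD sphere_minimizer_sqnorm xi_v; lra.
by rewrite mulf_eq0 pnatr_eq0 => /eqP.
Qed.

Hypothesis Rm_gt0 : forall i j, 0 < Rm i j.

Lemma sphere_minimizer_mul_ge0 i j : 0 <= xi ord0 i * xi ord0 j.
Proof.
pose gap p := 2 * Rm p.1 p.2 * (`|xi ord0 p.1 * xi ord0 p.2| - xi ord0 p.1 * xi ord0 p.2).
have gap_ge0 p : 0 <= gap p.
  by rewrite /gap mulr_ge0 ?subr_ge0 ?ler_norm // mulr_ge0 ?ltW.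
have sum_gap0 : \sum_p gap p = 0.
  apply/eqP; rewrite eq_le sumr_ge0 // andbT -lossR_sub_norm subr_le0.
  have := sphere_minimizer_le (map_mx Num.norm xi).
  by rewrite sqnorm_norm sphere_minimizer_sqnorm mulr1.
have /eqP := @psumr_eq0P _ _ _ gap (fun p _ => gap_ge0 p) sum_gap0 (i, j) isT.
rewrite !mulf_eq0 pnatr_eq0 (gt_eqF (Rm_gt0 i j)) /= subr_eq0 => /eqP <-.
exact: normr_ge0.
Qed.

Lemma sphere_minimizer_neq0 k : xi ord0 k != 0.
Proof.
apply/eqP => xi_k0.
have [m /andP[_ xi_m2_gt0]] : exists m, true && (0 < xi ord0 m ^+ 2).
  apply: psumr_neq0P => [i _|]; first exact: sqr_ge0.
  by rewrite -/(sqnorm xi) sphere_minimizer_sqnorm; exact/eqP/oner_neq0.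
have /eqP := sphere_minimizer_polar_eq0 (etrans (dotr_delta xi k) xi_k0).
rewrite lossR_polar_delta // oppr_eq0 => /eqP sum0.
have term_ge0 j : 0 <= xi ord0 m * ((Rm k j + Rm j k) * xi ord0 j).
  rewrite mulrCA; apply: mulr_ge0 (sphere_minimizer_mul_ge0 m j).
  by rewrite ltW ?addr_gt0.
have term_m_gt0 : 0 < xi ord0 m * ((Rm k m + Rm m k) * xi ord0 m).
  by rewrite mulrCA -expr2 mulr_gt0 ?addr_gt0.
have rest_ge0 : 0 <= \sum_(j < d | j != m) xi ord0 m * ((Rm k j + Rm j k) * xi ord0 j).
  by apply: sumr_ge0 => j _; apply: term_ge0.
have : 0 < xi ord0 m * \sum_(j < d) (Rm k j + Rm j k) * xi ord0 j.
  by rewrite mulr_sumr (bigD1 m) //= ltr_wpDr.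
by rewrite sum0 mulr0 ltxx.
Qed.

End SphereMinimizer.

Theorem mainTheorem2 (R : realType) (d : nat) (Rm : 'M[R]_d)
  (hd : (1 <= d)%N)
  (hpos : forall i j, 0 < Rm i j)
  (hdiag : forall i, Rm i i = 1)
  (xi : 'rV[R]_d) (hmin : is_sphere_minimizer Rm xi) :
  (forall i, 0 < xi ord0 i) \/ (forall i, xi ord0 i < 0).
Proof.
pose i0 := Ordinal hd.
have xi_neq0 := sphere_minimizer_neq0 hmin hpos.
have same_sign i : 0 < xi ord0 i0 * xi ord0 i.
  by rewrite lt0r mulf_neq0 ?xi_neq0 ?(sphere_minimizer_mul_ge0 hmin hpos).
have [xi0_lt0|xi0_gt0|xi0_eq0] := ltgtP (xi ord0 i0) 0.
- by right=> i; have := same_sign i; rewrite nmulr_rgt0.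
- by left=> i; have := same_sign i; rewrite pmulr_rgt0.
- by have := xi_neq0 i0; rewrite xi0_eq0 eqxx.
Qed.
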